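(* In the setting described in the context, if type A blowup occurs, then either $0<v_0<1$ and $\omega_0>-\frac{\nu}{2}f_0(v_0)$, or $v_0>1$ and $\omega_0<-\frac{\nu}{2}f_0(v_0)$.
   Context: Fix $\nu>0$, $v_0>0$ with $v_0\neq1$, and $\omega_0\in\mathbb{R}$. Consider the real ODE system $\frac{d\omega_{-2,i}}{dt}=\omega_{-2,i}^2\frac{1-2v_c^2+5v_c^4}{4v_c^2(1-v_c^2)^2}-\nu\omega_{-2,i}$, $\frac{dv_c}{dt}=-\omega_{-2,i}\frac{1+v_c^2}{4v_c(1-v_c^2)}$ with $v_c(0)=v_0$, $\omega_{-2,i}(0)=\omega_0$; its solution (continued through $v_c=1$) is characterized as follows. Let $F(v)=\frac{v(v^2-1)}{(v^2+1)^2}+\arctan v$, which is a strictly increasing bijection from $(0,\infty)$ onto $(0,\pi/2)$, and let $G(t)=F(v_0)+\frac{2\omega_0 v_0(1-e^{-\nu t})}{\nu(v_0^2-1)(v_0^2+1)^2}$. Then $v_c(t)$ is defined by $F(v_c(t))=G(t)$ for as long as $G(t)\in(0,\pi/2)$, and $\omega_{-2,i}(t)=\omega_0e^{-\nu t}\frac{v_0}{v_c(t)}\frac{v_c(t)^2-1}{v_0^2-1}\left(\frac{v_c(t)^2+1}{v_0^2+1}\right)^2$. Type A blowup means: there is a finite $t_c>0$ with $v_c(t)>0$ on $[0,t_c)$ and $v_c(t)\to0^+$ as $t\to t_c^-$. Type B blowup means: there is a finite $t_c>0$ with $v_c(t)\in(0,\infty)$ on $[0,t_c)$ and $v_c(t)\to+\infty$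 as $t\to t_c^-$. Here $f_0(x)=(x^2-1)^2+\frac{(x^2+1)^2}{x}(x^2-1)\arctan(x)$ and $f_\infty(x)=(x^2-1)^2+\frac{(x^2+1)^2}{x}(x^2-1)\left(\arctan(x)-\frac{\pi}{2}\right)$ for $x>0$. *)

From Stdlib Require Import Reals.
From Coquelicot Require Import Coquelicot.
Open Scope R_scope.

Definition Fv (v : R) : R := v * (v ^ 2 - 1) / (v ^ 2 + 1) ^ 2 + atan v.

Definition Gt (nu v0 w0 t : R) : R :=
  Fv v0 + 2 * w0 * v0 * (1 - exp (- nu * t))
          / (nu * (v0 ^ 2 - 1) * (v0 ^ 2 + 1) ^ 2).

Definition f0 (x : R) : R :=
  (x ^ 2 - 1) ^ 2 + (x ^ 2 + 1) ^ 2 / x * (x ^ 2 - 1) * atan x.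

Definition typeA_blowup (nu v0 w0 : R) : Prop :=
  exists (tc : R) (vc : R -> R),
    0 < tc /\
    (forall t, 0 <= t < tc -> 0 < vc t /\ Fv (vc t) = Gt nu v0 w0 t) /\
    filterlim vc (at_left tc) (locally 0).

(* Along a type A blowup, continuity of [F] at [0] with [F 0 = 0] forces
   [G t_c = 0].  Writing [E = exp (- nu t_c)], this equation says exactly
   [w0 (1 - E) = - (nu/2) f_0(v0)], and [0 < 1 - E < 1].  Since [F > 0] on
   [(0, oo)], the threshold [- (nu/2) f_0(v0)] has the sign of [1 - v0^2],
   so dividing by [1 - E] pushes [w0] strictly beyond the threshold. *)
From Stdlib Require Import Reals Lra Psatz.
From Coquelicot Require Import Coquelicot.
Open Scope R_scope.

Lemma Fv_0 : Fv 0 = 0.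
Proof. unfold Fv; rewrite atan_0; field. Qed.

Lemma is_derive_Fv (x : R) : is_derive Fv x (8 * x ^ 2 / (x ^ 2 + 1) ^ 3).
Proof.
  unfold Fv; auto_derive.
  - nra.
  - field; nra.
Qed.

Lemma continuous_Fv (x : R) : continuous Fv x.
Proof.
  apply (ex_derive_continuous (K := R_AbsRing) (V := R_NormedModule)).
  eexists; apply is_derive_Fv.
Qed.

Lemma Fv_gt0 (v : R) : 0 < v -> 0 < Fv v.
Proof.
  intros Hv.
  destruct (MVT_cor2 Fv (fun x => 8 * x ^ 2 / (x ^ 2 + 1) ^ 3) 0 v Hv)
    as [c [Hmvt Hc]].
  { intros c _; apply is_derive_Reals, is_derive_Fv. }
  rewrite Fv_0, Rminus_0_r, Rminus_0_r in Hmvt; rewrite Hmvt.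
  apply Rmult_lt_0_compat; [|lra].
  apply Rdiv_lt_0_compat; [nra | apply pow_lt; nra].
Qed.

Lemma f0_Fv (x : R) : x <> 0 -> f0 x = Fv x * (x ^ 2 + 1) ^ 2 * (x ^ 2 - 1) / x.
Proof. intros Hx; unfold f0, Fv; field; split; [nra | exact Hx]. Qed.

Lemma f0_factor (x : R) :
  0 < x -> exists P, 0 < P /\ f0 x = P * (x ^ 2 - 1).
Proof.
  intros Hx; exists (Fv x * (x ^ 2 + 1) ^ 2 / x); split.
  - apply Rdiv_lt_0_compat; [|exact Hx].
    apply Rmult_lt_0_compat; [exact (Fv_gt0 x Hx) | apply pow_lt; nra].
  - rewrite f0_Fv by lra; field; lra.
Qed.

Lemma f0_lt0 (x : R) : 0 < x < 1 -> f0 x < 0.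
Proof.
  intros Hx; destruct (f0_factor x (proj1 Hx)) as [P [HP ->]].
  assert (x ^ 2 - 1 < 0) by nra; nra.
Qed.

Lemma f0_gt0 (x : R) : 1 < x -> 0 < f0 x.
Proof.
  intros Hx; destruct (f0_factor x ltac:(lra)) as [P [HP ->]].
  assert (0 < x ^ 2 - 1) by nra; nra.
Qed.

Lemma beyond_threshold (w s T : R) :
  0 < s < 1 -> w * s = T -> (0 < T -> T < w) /\ (T < 0 -> w < T).
Proof. intros Hs HT; subst T; split; intros; nra. Qed.

Lemma continuous_Gt (nu v0 w0 t : R) : continuous (Gt nu v0 w0) t.
Proof.
  apply (ex_derive_continuous (K := R_AbsRing) (V := R_NormedModule)).
  unfold Gt; auto_derive; exact I.
Qed.

Lemma typeA_blowup_Gt_root (nu v0 w0 : R) :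
  typeA_blowup nu v0 w0 -> exists tc, 0 < tc /\ Gt nu v0 w0 tc = 0.
Proof.
  intros [tc [vc [Htc [Hsol Hlim]]]]; exists tc; split; [exact Htc|].
  assert (HFvc : filterlim (fun t => Fv (vc t)) (at_left tc) (locally 0)).
  { eapply filterlim_comp; [exact Hlim|].
    pose proof (continuous_Fv 0) as C; unfold continuous in C.
    rewrite Fv_0 in C; exact C. }
  assert (HG0 : filterlim (Gt nu v0 w0) (at_left tc) (locally 0)).
  { eapply filterlim_ext_loc; [|exact HFvc].
    exists (mkposreal tc Htc); intros y Hy Hlt.
    apply Hsol; split; [|exact Hlt].
    unfold ball in Hy; simpl in Hy.
    unfold AbsRing_ball, abs, minus, plus, opp in Hy; simpl in Hy.
    apply Rabs_lt_between in Hy; lra. }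
  assert (HGtc : filterlim (Gt nu v0 w0) (at_left tc) (locally (Gt nu v0 w0 tc))).
  { apply (filterlim_filter_le_1 (F := locally tc)); [|apply continuous_Gt].
    intros P [d Hd]; exists d; intros y Hy _; exact (Hd y Hy). }
  exact (filterlim_locally_unique _ _ _ HGtc HG0).
Qed.

Lemma Gt_root_threshold (nu v0 w0 t : R) :
  0 < nu -> 0 < v0 -> v0 <> 1 -> Gt nu v0 w0 t = 0 ->
  w0 * (1 - exp (- nu * t)) = - (nu / 2) * f0 v0.
Proof.
  intros Hnu Hv0 Hv1 HG.
  assert (Ha : v0 ^ 2 - 1 <> 0).
  { intros Ha; apply Hv1; nra. }
  assert (Hb : 0 < (v0 ^ 2 + 1) ^ 2) by (apply pow_lt; nra).
  rewrite f0_Fv by lra.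
  unfold Gt in HG.
  set (K := Fv v0) in *; set (E := exp (- nu * t)) in *.
  (* multiply [G t = 0] by [nu (v0^2 - 1) (v0^2 + 1)^2 / (2 v0)] *)
  replace (w0 * (1 - E)) with
    ((K + 2 * w0 * v0 * (1 - E) / (nu * (v0 ^ 2 - 1) * (v0 ^ 2 + 1) ^ 2))
       * (nu * (v0 ^ 2 - 1) * (v0 ^ 2 + 1) ^ 2 / (2 * v0))
     - K * nu * (v0 ^ 2 - 1) * (v0 ^ 2 + 1) ^ 2 / (2 * v0))
    by (field; repeat split; nra).
  rewrite HG; field; lra.
Qed.

Theorem lemma3p2 (nu v0 w0 : R) :
  0 < nu -> 0 < v0 -> v0 <> 1 ->
  typeA_blowup nu v0 w0 ->
  (0 < v0 < 1 /\ w0 > - (nu / 2) * f0 v0) \/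
  (v0 > 1 /\ w0 < - (nu / 2) * f0 v0).
Proof.
  intros Hnu Hv0 Hv1 Hblow.
  destruct (typeA_blowup_Gt_root _ _ _ Hblow) as [tc [Htc HG]].
  pose proof (Gt_root_threshold _ _ _ _ Hnu Hv0 Hv1 HG) as Hthr.
  assert (HE : 0 < 1 - exp (- nu * tc) < 1).
  { assert (exp (- nu * tc) < 1).
    { rewrite <- exp_0; apply exp_increasing; nra. }
    pose proof (exp_pos (- nu * tc)); lra. }
  destruct (beyond_threshold _ _ _ HE Hthr) as [Hpos Hneg].
  destruct (Rlt_or_le v0 1) as [Hlt | Hge].
  - left; split; [lra|].
    apply Hpos; pose proof (f0_lt0 v0 ltac:(lra)); nra.
  - right; split; [lra|].
    apply Hneg; pose proof (f0_gt0 v0 ltac:(lra)); nra.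
Qed.
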